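(* Let $(W,S)$ be a Coxeter system of rank $n$ and $\mathbf{s}\in S^*$. Let $\sigma=\sigma_q\circ\cdots\circ\sigma_1$ be a sequence of braid-moves applied successively to $\mathbf{s}$, where $\sigma_i$ replaces a consecutive subword $\mathbf{b}^i_{x_iy_i}$ by $\mathbf{b}^i_{y_ix_i}$ ($x_i,y_i\in S$). Suppose that for every $i\in\{1,\dots,q-1\}$ the last letter (as an occurrence in the current word) of $\mathbf{b}^i_{y_ix_i}$ is the first letter of $\mathbf{b}^{i+1}_{x_{i+1}y_{i+1}}$. Then $\omega(\sigma(\mathbf{s}))=\omega(\mathbf{s})$, and there are reflections $r_1,r_2\in R_n$ with \[ \omega_n(\sigma(\mathbf{s}))=\omega_n(\mathbf{s})\cdot r_1\cdot r_2. \]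
   Context: $W=\langle S\mid s_i^2=(s_is_j)^{m_{ij}}=1\rangle$; $\omega:S^*\to W$ and $\omega_n:S^*\to W_n$ are the canonical surjections, where $W_n$ is the universal Coxeter group on $S$ (only relations $s_i^2=1$) and $R_n$ its set of reflections (conjugates of elements of $S$ in $W_n$). For finite $m_{xy}$, $\mathbf{b}_{xy}$ is the alternating word in $x,y$ of length $m_{xy}$ starting with $x$; a braid-move replaces a consecutive subword $\mathbf{b}_{xy}$ by $\mathbf{b}_{yx}$. *)

From mathcomp Require Import all_boot.
From Stdlib Require Import Relation_Operators.
Set Implicit Arguments. Unset Strict Implicit. Unset Printing Implicit Defensive.

(* A Coxeter matrix on a finite generating set S: m x y = Some k means
   m_xy = k, and None means m_xy = infinity. *)
Definition coxeter_matrix (S : finType) (m : S -> S -> option nat) : Prop :=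
  (forall x, m x x = Some 1%N) /\
  (forall x y, m x y = m y x) /\
  (forall x y, x != y -> forall k, m x y = Some k -> (2 <= k)%N).

Definition alt_word (S : Type) (x y : S) (k : nat) : seq S :=
  mkseq (fun i => if odd i then y else x) k.

(* One elementary use of a defining relator (s_x s_y)^{m_xy} = 1
   (for x = y this is s_x^2 = 1, since m_xx = 1). *)
Inductive cox_step (S : finType) (m : S -> S -> option nat) : seq S -> seq S -> Prop :=
| CoxStep u v x y k : m x y = Some k ->
    cox_step m (u ++ alt_word x y (2 * k) ++ v) (u ++ v).

(* Equality in the Coxeter group W presented by m:
   omega(a) = omega(b)  iff  cox_eq m a b.  (Since all generators are
   involutions, the group presentation coincides with the monoid one.) *)
Definition cox_eq (S : finType) (m : S -> S -> option nat) : seq S -> seq S -> Prop :=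
  clos_refl_sym_trans (seq S) (cox_step m).

(* The Coxeter matrix of the universal Coxeter group W_n: only s^2 = 1. *)
Definition univ_matrix (S : finType) (x y : S) : option nat :=
  if x == y then Some 1%N else None.

(* A word representing a conjugate  u s u^{-1}  of a generator s, i.e. a
   representative of a reflection. *)
Definition refl_word (S : Type) (u : seq S) (t : S) : seq S := u ++ t :: rev u.

(* w' is obtained from w by the braid-move replacing the consecutive
   subword b_xy = alt_word x y k at position p (0-based) by b_yx,
   where k = m_xy is finite. *)
Definition braid_move (S : finType) (m : S -> S -> option nat)
    (w : seq S) (p : nat) (x y : S) (k : nat) (w' : seq S) : Prop :=
  [/\ m x y = Some k, (p + k <= size w)%N,
      take k (drop p w) = alt_word x y k
    & w' = take p w ++ alt_word y x k ++ drop (p + k) w].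

(* Deleting the first letter of b_xy and deleting the last letter of b_yx
   leave the same word.  Hence, when each braid-move starts at the letter where
   the previous one ended, the word obtained from the current word by deleting
   the letter at that junction never changes along the chain: it is the word D
   obtained from s by deleting the first letter of b^1.  In a group generated
   by involutions, X a V = (X V) (V^-1 a V), so s = D r1 and sigma(s) = D r2
   for reflections r1, r2, whence sigma(s) = s r1 r2 in W_n. *)
From mathcomp Require Import all_boot zify.
From Stdlib Require Import Relation_Operators.

Set Implicit Arguments. Unset Strict Implicit. Unset Printing Implicit Defensive.

Definition delete_nth (T : Type) (i : nat) (w : seq T) : seq T :=
  take i w ++ drop i.+1 w.

Lemma delete_nth_cat (T : Type) (X V : seq T) (a : T) :
  delete_nth (size X) (X ++ a :: V) = X ++ V.
Proof. by rewrite /delete_nth take_size_cat // -cat_rcons drop_size_cat ?size_rcons. Qed.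

Lemma alt_wordS (T : Type) (x y : T) k : alt_word x y k.+1 = x :: alt_word y x k.
Proof.
rewrite /alt_word /mkseq /= -[1]/(1 + 0) iotaDl -map_comp; congr (_ :: _).
by apply: eq_map => i /=; case: (odd i).
Qed.

Lemma alt_word_rcons (T : Type) (x y : T) k :
  alt_word x y k.+1 = rcons (alt_word x y k) (if odd k then y else x).
Proof. by rewrite /alt_word mkseqS. Qed.

Lemma size_alt_word (T : Type) (x y : T) k : size (alt_word x y k) = k.
Proof. exact: size_mkseq. Qed.

Lemma alt_word_cat_rev (T : Type) (x y : T) k :
  alt_word x y k ++ rev (alt_word y x k) = alt_word x y (2 * k).
Proof.
elim: k x y => [|k IH] x y //.
rewrite mulnS add2n (alt_wordS x) (alt_wordS y) (alt_wordS x y (2 * k).+1) mul2n.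
by rewrite alt_word_rcons odd_double -mul2n rev_cons /= -IH rcons_cat.
Qed.

Section CoxeterWords.
Variables (S : finType) (m : S -> S -> option nat).

Lemma cox_eq_sym a b : cox_eq m a b -> cox_eq m b a.
Proof. exact: rst_sym. Qed.

Lemma cox_eq_trans b a c : cox_eq m a b -> cox_eq m b c -> cox_eq m a c.
Proof. exact: rst_trans. Qed.

Lemma cox_eq_cat u v a b : cox_eq m a b -> cox_eq m (u ++ a ++ v) (u ++ b ++ v).
Proof.
elim=> [_ _ [u' v' x y k hk] | a' | a' b' _ IH | a' b' c' _ IHab _ IHbc].
- by apply: rst_step; have := CoxStep (u ++ u') (v' ++ v) hk; rewrite -!catA.
- exact: rst_refl.
- exact: cox_eq_sym.
- exact: cox_eq_trans IHab IHbc.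
Qed.

Hypothesis m_diag : forall x, m x x = Some 1.

Lemma cox_eq_cat_rev u w v : cox_eq m (u ++ w ++ rev w ++ v) (u ++ v).
Proof.
elim: w u v => [|a w IH] u v /=; first exact: rst_refl.
apply: (cox_eq_trans (b := rcons u a ++ a :: v)).
  by rewrite rev_cons -cats1 -!catA /= -cat_rcons; apply: IH.
by rewrite -cats1 -catA; apply: rst_step; apply: (CoxStep u v (m_diag a)).
Qed.

Lemma cox_eq_braid u v x y k :
  m x y = Some k -> cox_eq m (u ++ alt_word x y k ++ v) (u ++ alt_word y x k ++ v).
Proof.
move=> hk; apply: (cox_eq_trans (b := u ++ alt_word x y (2 * k) ++ alt_word y x k ++ v)).
  have := cox_eq_cat_rev (u ++ alt_word x y k) (rev (alt_word y x k)) v.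
  by rewrite revK -alt_word_cat_rev -!catA => /cox_eq_sym.
by apply: rst_step; apply: CoxStep hk.
Qed.

Lemma cox_eq_braid_move w p x y k w' : braid_move m w p x y k w' -> cox_eq m w w'.
Proof.
case=> hk _ htake ->.
rewrite -{1}(cat_take_drop p w) -{1}(cat_take_drop k (drop p w)) htake.
by rewrite drop_drop addnC; apply: cox_eq_braid.
Qed.

Lemma cox_eq_refl_wordK v u t : cox_eq m (v ++ refl_word u t ++ refl_word u t) v.
Proof.
have h1 := cox_eq_cat_rev (v ++ u ++ [:: t]) (rev u) (t :: rev u).
have h2 := cox_eq_cat_rev (v ++ u) [:: t] (rev u).
have h3 := cox_eq_cat_rev v u [::].
rewrite revK -!catA /= in h1 h2; rewrite cats0 in h3.
rewrite -[X in cox_eq m _ X]cats0.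
by rewrite /refl_word -!catA /=; exact: cox_eq_trans h1 (cox_eq_trans h2 h3).
Qed.

(* X a V = (X V) (V^-1 a V) *)
Lemma cox_eq_delete_nth w i : i < size w ->
  exists u t, cox_eq m w (delete_nth i w ++ refl_word u t).
Proof.
case: w => [//|a w'] hi; set w := a :: w'.
exists (rev (drop i.+1 w)), (nth a w i).
rewrite -{1}(cat_take_drop i w) (drop_nth a hi) /delete_nth /refl_word revK -catA.
by apply: cox_eq_sym; apply: cox_eq_cat_rev.
Qed.

Lemma cox_eq_cat_refl_word a b u t :
  cox_eq m a (b ++ refl_word u t) -> cox_eq m (a ++ refl_word u t) b.
Proof.
move=> h; apply: (cox_eq_trans (b := b ++ refl_word u t ++ refl_word u t)).
  by have := cox_eq_cat [::] (refl_word u t) h; rewrite -catA.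
exact: cox_eq_refl_wordK.
Qed.

End CoxeterWords.

Lemma univ_matrix_diag (S : finType) (x : S) : univ_matrix x x = Some 1.
Proof. by rewrite /univ_matrix eqxx. Qed.

Lemma coxeter_matrix_gt0 (S : finType) (m : S -> S -> option nat) x y k :
  coxeter_matrix m -> m x y = Some k -> 0 < k.
Proof.
case=> m_diag [_ m_offdiag] hk; case: (eqVneq x y) => [exy | nxy].
  by move: hk; rewrite exy m_diag => -[<-].
exact: leq_trans (m_offdiag _ _ nxy _ hk).
Qed.

Section BraidMove.
Variables (S : finType) (m : S -> S -> option nat) (w w' : seq S) (p k : nat) (x y : S).
Hypothesis move : braid_move m w p x y k w'.

Lemma size_braid_move : size w' = size w.
Proof.
case: move => _ hsize _ ->.
rewrite !size_cat size_alt_word size_drop size_takel; lia.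
Qed.

Lemma braid_move_first_lt : 0 < k -> p < size w.
Proof. by case: move => _ hsize _ _ hk; apply: leq_trans hsize; rewrite -addn1 leq_add2l. Qed.

Lemma braid_move_last_lt : 0 < k -> (p + k).-1 < size w'.
Proof. by case: move => _ hsize _ _ hk; rewrite size_braid_move; lia. Qed.

(* The braid-move turns X (x M) D into X (M z) D; both delete to X M D. *)
Lemma delete_nth_braid_move : 0 < k -> delete_nth p w = delete_nth (p + k).-1 w'.
Proof.
move=> /prednK ek; case: move => _ hsize htake ->; rewrite -ek in hsize htake *.
set X := take p w; set D := drop (p + k.-1.+1) w.
have hX : size X = p by rewrite size_takel // (leq_trans (leq_addr _ _) hsize).
have hw : drop p w = x :: alt_word y x k.-1 ++ D.
  by rewrite -{1}(cat_take_drop k.-1.+1 (drop p w)) htake drop_drop addnC alt_wordS.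
have -> : (p + k.-1.+1).-1 = size (X ++ alt_word y x k.-1).
  by rewrite size_cat hX size_alt_word addnS.
rewrite alt_word_rcons cat_rcons catA delete_nth_cat -catA.
by rewrite /delete_nth -/X -add1n -drop_drop hw /= drop0.
Qed.

End BraidMove.

Section BraidChain.
Variables (S : finType) (m : S -> S -> option nat) (q : nat).
Variables (ws : nat -> seq S) (p k : nat -> nat) (x y : nat -> S).
Hypothesis m_cox : coxeter_matrix m.
Hypothesis moves : forall i, i < q -> braid_move m (ws i) (p i) (x i) (y i) (k i) (ws i.+1).
Hypothesis chained : forall i, i.+1 < q -> p i.+1 = (p i + k i).-1.

Lemma braid_chain_k_gt0 i : i < q -> 0 < k i.
Proof. by move=> /moves [hk _ _ _]; apply: coxeter_matrix_gt0 m_cox hk. Qed.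

Lemma cox_eq_braid_chain : cox_eq m (ws 0) (ws q).
Proof.
have m_diag : forall z, m z z = Some 1 by case: m_cox.
suff: forall j, j <= q -> cox_eq m (ws 0) (ws j) by apply.
elim=> [|j IH] hj; first exact: rst_refl.
exact: cox_eq_trans (IH (ltnW hj)) (cox_eq_braid_move m_diag (moves hj)).
Qed.

Lemma delete_nth_braid_chain j :
  j < q -> delete_nth (p j + k j).-1 (ws j.+1) = delete_nth (p 0) (ws 0).
Proof.
elim: j => [|j IH] hj.
  by rewrite (delete_nth_braid_move (moves hj) (braid_chain_k_gt0 hj)).
rewrite -(delete_nth_braid_move (moves hj) (braid_chain_k_gt0 hj)) chained //.
exact: IH (ltnW hj).
Qed.

End BraidChain.

Theorem mainTheorem8 (n : nat) (m : 'I_n -> 'I_n -> option nat)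
    (s : seq 'I_n) (q : nat)
    (ws : nat -> seq 'I_n) (p : nat -> nat) (x y : nat -> 'I_n) (k : nat -> nat) :
  coxeter_matrix m ->
  ws 0 = s ->
  (forall i, (i < q)%N -> braid_move m (ws i) (p i) (x i) (y i) (k i) (ws i.+1)) ->
  (forall i, (i.+1 < q)%N -> p i.+1 = (p i + k i).-1) ->
  cox_eq m (ws q) s /\
  exists (u1 u2 : seq 'I_n) (t1 t2 : 'I_n),
    cox_eq (@univ_matrix _) (ws q) (s ++ refl_word u1 t1 ++ refl_word u2 t2).
Proof.
move=> m_cox <- moves chained; split.
  exact/cox_eq_sym/(cox_eq_braid_chain m_cox moves).
have univ_diag := @univ_matrix_diag 'I_n.
case: q moves chained => [|q] moves chained.
  by exists [::], [::], (x 0), (x 0); apply/cox_eq_sym/cox_eq_refl_wordK.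
have k_gt0 := braid_chain_k_gt0 m_cox moves.
have [u1 [t1 hs]] := cox_eq_delete_nth univ_diag
  (braid_move_first_lt (moves 0 isT) (k_gt0 0 isT)).
have [u2 [t2 hws]] := cox_eq_delete_nth univ_diag
  (braid_move_last_lt (moves q (ltnSn q)) (k_gt0 q (ltnSn q))).
exists u1, u2, t1, t2.
rewrite (delete_nth_braid_chain m_cox moves chained (ltnSn q)) in hws.
apply: cox_eq_trans hws _; rewrite catA.
exact/(cox_eq_cat [::] _)/cox_eq_sym/cox_eq_cat_refl_word.
Qed.
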